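(* Let $(S,V)$ be a complete semiring-semimodule pair, let $S'\subseteq S$ contain $0$ and $1$, and let $\mathcal P=(n,\Gamma,I,M,P,p_0,l)$ be an $S'$-$\omega$-pushdown automaton over $(S,V)$. Then $\big(\|\mathcal P\|,\ (((M^* )_{p,\epsilon})_{p\in\Gamma},((M^{\omega,l})_p)_{p\in\Gamma})\big)$ is a solution of the $S'^{n\times n}$-algebraic system $$y_0=I\,y_{p_0}\,P,\qquad y_p=\sum_{\pi\in\Gamma^*}M_{p,\pi}\,y_\pi,\quad p\in\Gamma,$$ over the complete semiring-semimodule pair $(S^{n\times n},V^n)$. Explicitly, with $x_p=(M^* )_{p,\epsilon}$ and $z_p=(M^{\omega,l})_p$: for all $p\in\Gamma$, $x_p=\sum_{\pi\in\Gamma^*}M_{p,\pi}x_\pi$ and $z_p=\sum_{\pi=p_1\dots p_k\in\Gamma^+}M_{p,\pi}\sum_{1\le j\le k}x_{p_1}\cdots x_{p_{j-1}}z_{p_j}$ (where $x_{p_1\dots p_k}=x_{p_1}\cdots x_{p_k}$, $x_\epsilon=E$), and $\|\mathcal P\|=(I x_{p_0}P,\ I z_{p_0})$.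
   Context: A complete semiring-semimodule pair $(S,V)$ (in the sense of Ésik and Kuich, ''Modern Automata Theory'') consists of a complete starsemiring $S$ (arbitrary sums with infinite associativity/commutativity/distributivity laws, star $s^*=\sum_{j\ge0}s^j$) and a complete $S$-semimodule $V$, with infinite products $\prod_{j\ge1}s_j\in V$ of sequences in $S$ satisfying the axioms of that framework. The quemiring $S\times V$ (and likewise $S^{n\times n}\times V^n$) has componentwise sum and product $(s,u)(s',u')=(ss',u+su')$; in the system $y_p=(x_p,z_p)$, $y_{p_1\dots p_k}=y_{p_1}\cdots y_{p_k}$, $y_\epsilon=(E,0)$, matrices act componentwise, and $I(s,u)P=(IsP,Iu)$. A pushdown transition matrix $M\in (S'^{n\times n})^{\Gamma^*\times\Gamma^*}$ ($\Gamma^*\times\Gamma^*$ matrix with $n\times n$ blocks over $S'$) satisfies (i) for each $p\in\Gamma$ only finitely many blocks $M_{p,\pi}$ are nonzero, and (ii) $M_{\pi_1,\pi_2}=M_{p,\pi}$ if $\pi_1=p\pi'$, $\pi_2=\pi\pi'$ for some $p\in\Gamma$, $\pi,\pi'\in\Gamma^*$, and $0$ otherwise. An $S'$-$\omega$-pushdown automaton $\mathcal P=(n,\Gamma,I,M,P,p_0,l)$ consists of $n\ge1$ (states $1,\dots,n$), an alphabet $\Gamma$, a pushdown transition matrix $M\in(S'^{n\times n})^{\Gamma^*\times\Gamma^*}$, $I\in S'^{1\times n}$, $P\in S'^{n\times1}$, $p_0\in\Gamma$, and $l\in\{0,\dots,n\}$. $M^*=\sum_{m\ge0}M^m$ with blocks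 $(M^* )_{\pi,\pi'}$; with $P_l=\{(j_1,j_2,\dots)\in\{1,\dots,n\}^\omega\mid j_t\le l\text{ for infinitely many }t\}$, $M^{\omega,l}\in (V^n)^{\Gamma^*}$ is given by $((M^{\omega,l})_\pi)_i=\sum_{\pi_1,\pi_2,\ldots\in\Gamma^*}\sum_{(j_1,j_2,\ldots)\in P_l}(M_{\pi,\pi_1})_{i,j_1}(M_{\pi_1,\pi_2})_{j_1,j_2}\cdots$. The behavior is $\|\mathcal P\|=I(M^* )_{p_0,\epsilon}P+I(M^{\omega,l})_{p_0}$, i.e. the element $(I(M^* )_{p_0,\epsilon}P,\ I(M^{\omega,l})_{p_0})$ of the quemiring $S\times V$. *)

From HB Require Import structures.
From mathcomp Require Import all_boot all_order all_algebra.
Set Implicit Arguments. Unset Strict Implicit. Unset Printing Implicit Defensive.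
Import Order.TTheory GRing.Theory.
Local Open Scope ring_scope.

(* Axioms of a complete (commutative) monoid (T, +, 0, csum). Partitions of
   the index set I into blocks indexed by J are given by a map f : I -> J
   (block j = fibre of f over j). *)
Definition complete_monoid_axioms (T : nmodType)
    (cs : forall I : Type, (I -> T) -> T) : Prop :=
  [/\ (forall (I : Type) (a : I -> T), (I -> False) -> cs I a = 0),
      (forall (I : Type) (a : I -> T) (i0 : I), (forall i, i = i0) -> cs I a = a i0),
      (forall (I : Type) (a : I -> T) (j k : I), j <> k ->
          (forall i, i = j \/ i = k) -> cs I a = a j + a k)
    & (forall (I J : Type) (f : I -> J) (a : I -> T),
          cs I a = cs J (fun j => cs {i : I | f i = j} (fun i => a (proj1_sig i))))].

Definition complete_semiring_axioms (S : pzSemiRingType)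
    (csS : forall I : Type, (I -> S) -> S) : Prop :=
  [/\ complete_monoid_axioms csS,
      (forall (I : Type) (a : I -> S) (c : S), csS I (fun i => c * a i) = c * csS I a)
    & (forall (I : Type) (a : I -> S) (c : S), csS I (fun i => a i * c) = csS I a * c)].

Definition complete_semimodule_axioms (S : pzSemiRingType) (V : lSemiModType S)
    (csS : forall I : Type, (I -> S) -> S)
    (csV : forall I : Type, (I -> V) -> V) : Prop :=
  [/\ complete_monoid_axioms csV,
      (forall (I : Type) (a : I -> S) (v : V), csS I a *: v = csV I (fun i => a i *: v))
    & (forall (I : Type) (v : I -> V) (s : S), s *: csV I v = csV I (fun i => s *: v i))].

(* Complete semiring-semimodule pair (S,V) with infinite product
   ip s = prod_{j>=1} s_j (sequences indexed from 0 here). *)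
Definition complete_pair_axioms (S : pzSemiRingType) (V : lSemiModType S)
    (csS : forall I : Type, (I -> S) -> S)
    (csV : forall I : Type, (I -> V) -> V)
    (ip : (nat -> S) -> V) : Prop :=
  [/\ complete_semiring_axioms csS,
      complete_semimodule_axioms csS csV,
      (forall s : nat -> S, ip s = s 0%N *: ip (fun j => s j.+1)),
      (forall (s : nat -> S) (k : nat -> nat), k 0%N = 0%N -> (forall j, (k j < k j.+1)%N) ->
          ip s = ip (fun j => \prod_(k j <= t < k j.+1) s t))
    & (forall (I : nat -> Type) (a : forall j, I j -> S),
          ip (fun j => csS (I j) (a j)) =
          csV (forall j, I j) (fun f => ip (fun j => a j (f j))))].

Section PDA.
Variables (S : pzSemiRingType) (V : lSemiModType S).
Variables (csS : forall I : Type, (I -> S) -> S) (csV : forall I : Type, (I -> V) -> V).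
Variable ip : (nat -> S) -> V.
Arguments csS : clear implicits.
Arguments csV : clear implicits.
Variables (n : nat) (Gamma : finType).

Definition msum (I : Type) (A : I -> 'M[S]_n) : 'M[S]_n :=
  \matrix_(i, j) csS I (fun k => A k i j).

Definition mact (A : 'M[S]_n) (v : 'I_n -> V) : 'I_n -> V :=
  fun i => \sum_(j < n) A i j *: v j.

Definition pushdown_matrix (M : seq Gamma -> seq Gamma -> 'M[S]_n) : Prop :=
  (forall p : Gamma, exists fin : seq (seq Gamma),
      forall pi : seq Gamma, M [:: p] pi <> 0 -> pi \in fin) /\
  (forall pi1 pi2 : seq Gamma,
      M pi1 pi2 = if pi1 is p :: pi' then
                    (if suffix pi' pi2 then M [:: p] (take (size pi2 - size pi') pi2)
                     else 0)
                  else 0).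

Definition is_omega_pda (S' : S -> Prop) (I : 'rV[S]_n)
    (M : seq Gamma -> seq Gamma -> 'M[S]_n) (P : 'cV[S]_n) (p0 : Gamma) (l : nat) : Prop :=
  [/\ (0 < n)%N, (l <= n)%N, pushdown_matrix M,
      (forall pi1 pi2 i j, S' (M pi1 pi2 i j))
    & (forall j, S' (I 0 j) /\ S' (P j 0))].

Variable M : seq Gamma -> seq Gamma -> 'M[S]_n.

Definition Mid (pi pi' : seq Gamma) : 'M[S]_n := if pi == pi' then 1%:M else 0.

Fixpoint Mpow (m : nat) : seq Gamma -> seq Gamma -> 'M[S]_n :=
  match m with
  | 0%N => Mid
  | m'.+1 => fun pi pi' => msum (fun pi'' : seq Gamma => Mpow m' pi pi'' *m M pi'' pi')
  end.

Definition Mstar (pi pi' : seq Gamma) : 'M[S]_n :=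
  msum (fun m : nat => Mpow m pi pi').

(* P_l : state sequences (j_1, j_2, ...) visiting states 1..l (i.e. 'I_n-indices < l)
   infinitely often; the sequence is indexed from 0 (js 0 = j_1). *)
Definition in_Pl (l : nat) (js : nat -> 'I_n) : Prop :=
  forall N : nat, exists2 t : nat, (N <= t)%N & (js t < l)%N.

(* (M^{omega,l})_pi, an element of V^n:
   ((M^{omega,l})_pi)_i = sum_{pi_1,pi_2,...} sum_{(j_1,j_2,...) in P_l}
        (M_{pi,pi_1})_{i,j_1} (M_{pi_1,pi_2})_{j_1,j_2} ... *)
Definition Momega (l : nat) (pi : seq Gamma) : 'I_n -> V :=
  fun i => csV (nat -> seq Gamma) (fun ps =>
           csV {js : nat -> 'I_n | in_Pl l js} (fun js =>
             ip (fun t => M (if t is t'.+1 then ps t' else pi) (ps t)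
                            (if t is t'.+1 then proj1_sig js t' else i)
                            (proj1_sig js t)))).

Definition behavior (I : 'rV[S]_n) (P : 'cV[S]_n) (p0 : Gamma) (l : nat) : S * V :=
  ((I *m Mstar [:: p0] [::] *m P) 0 0, \sum_(j < n) I 0 j *: Momega l [:: p0] j).

Definition xword (x : Gamma -> 'M[S]_n) (pi : seq Gamma) : 'M[S]_n :=
  foldr (fun p acc => x p *m acc) 1%:M pi.

End PDA.

From HB Require Import structures.
From mathcomp Require Import all_boot all_order all_algebra.
From Stdlib Require Import ClassicalEpsilon ProofIrrelevance FunctionalExtensionality.
Set Implicit Arguments. Unset Strict Implicit. Unset Printing Implicit Defensive.
Import GRing.Theory.
Local Open Scope ring_scope.

(* The transition matrix acts on the top of the stack only: M_{a r, b r} = M_{a, b}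
   for nonempty a, and M_{a r, s} <> 0 forces s = u r.  Hence a computation started
   with the stack w r either never reaches the stack r, and is then a computation
   started with w carrying r untouched below it, or it splits at its first visit
   to r.  A finite computation ending with the empty stack has to visit r, which
   gives M^*_{w r, eps} = M^*_{w, eps} M^*_{r, eps}, so that M^*_{pi, eps} = x_pi and
   the equation for x is the first-step decomposition of M^*.  For infinite
   computations the split gives z_{q r} = z_q + x_q z_r, so that
   M^{omega,l}_{p_1 ... p_k} = sum_j x_{p_1 ... p_(j-1)} z_{p_j}, and the equation
   for z is the first-step decomposition of M^{omega,l}. *)

Lemma sval_inj (A : Type) (P : A -> Prop) : injective (@sval A P).
Proof. exact: eq_sig_hprop (fun x => @proof_irrelevance (P x)). Qed.

Section CompleteMonoid.
Variables (T : nmodType) (csum : forall I : Type, (I -> T) -> T).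
Arguments csum : clear implicits.
Hypothesis csum_axioms : complete_monoid_axioms csum.

Lemma csum_ext (I : Type) (a b : I -> T) : a =1 b -> csum I a = csum I b.
Proof. by move=> /functional_extensionality ->. Qed.

Lemma csum_partition (I J : Type) (f : I -> J) (a : I -> T) :
  csum I a = csum J (fun j => csum {i : I | f i = j} (fun i => a (sval i))).
Proof. by case: csum_axioms => _ _ _; apply. Qed.

Lemma csum_empty (I : Type) (a : I -> T) : (I -> False) -> csum I a = 0.
Proof. by case: csum_axioms => csum0 _ _ _; apply: csum0. Qed.

Lemma csum_const0 (I : Type) : csum I (fun _ => 0) = 0.
Proof.
rewrite -[RHS](csum_empty (False_rect T)) // (csum_partition (False_rect I)).
by apply: csum_ext => i; rewrite csum_empty // => -[[]].
Qed.

Lemma csum_eq0 (I : Type) (a : I -> T) : (forall i, a i = 0) -> csum I a = 0.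
Proof. by move=> /csum_ext ->; apply: csum_const0. Qed.

Lemma csum_bool (c : bool -> T) : csum bool c = c true + c false.
Proof. by case: csum_axioms => _ _ csum2 _; apply: csum2 => // -[]; auto. Qed.

Lemma csum_single (I : Type) (a : I -> T) (i0 : I) :
  (forall i, i <> i0 -> a i = 0) -> csum I a = a i0.
Proof.
move=> a_supp; pose f i := if excluded_middle_informative (i = i0) then true else false.
have fP i : f i -> i = i0 by rewrite /f; case: excluded_middle_informative.
have fi0 : f i0 by rewrite /f; case: excluded_middle_informative.
rewrite (csum_partition f) csum_bool.
have -> : csum {i | f i = false} (fun i => a (sval i)) = 0.
  apply: csum_eq0 => -[i /= fi]; apply: a_supp => ei.
  by move: fi; rewrite ei fi0.
rewrite addr0; case: csum_axioms => _ csum1 _ _.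
by rewrite (csum1 _ _ (exist _ i0 fi0)) // => -[i fi]; apply: sval_inj; apply: fP.
Qed.

Lemma csum_reindex (I J : Type) (f : I -> J) (a : I -> T) (b : J -> T) :
  (forall j, (exists i0, [/\ f i0 = j, a i0 = b j & forall i, f i = j -> i <> i0 -> a i = 0])
        \/ (b j = 0 /\ forall i, f i = j -> a i = 0)) ->
  csum I a = csum J b.
Proof.
move=> fibres; rewrite (csum_partition f); apply: csum_ext => j.
case: (fibres j) => [[i0 [fi0 <- supp]] | [-> fibre0]].
- rewrite (csum_single (i0 := exist _ i0 fi0)) //= => -[i fi] ne.
  by apply: (supp i fi) => ei; apply: ne; apply: sval_inj.
- by apply: csum_eq0 => -[i fi]; apply: fibre0.
Qed.

Lemma csum_bij (I J : Type) (f : I -> J) (g : J -> I) (a : I -> T) :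
  cancel f g -> cancel g f -> csum I a = csum J (fun j => a (g j)).
Proof.
move=> fK gK; apply: (csum_reindex (f := f)) => j; left; exists (g j); split => //.
by move=> i <- ne; case: ne; rewrite fK.
Qed.

Lemma csum_pair (A B : Type) (a : A * B -> T) :
  csum (A * B) a = csum A (fun x => csum B (fun y => a (x, y))).
Proof.
rewrite (csum_partition fst); apply: csum_ext => x; symmetry.
apply: (csum_reindex (f := fun y => exist (fun p : A * B => p.1 = x) (x, y) erefl)).
by move=> [[x' y] /= ex]; subst x'; left; exists y; split => // y' [->].
Qed.

Lemma exchange_csum (A B : Type) (a : A -> B -> T) :
  csum A (fun x => csum B (a x)) = csum B (fun y => csum A (a^~ y)).
Proof.
rewrite -(csum_pair (fun p => a p.1 p.2)) -(csum_pair (fun p => a p.2 p.1)).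
by apply: (csum_bij (f := fun p => (p.2, p.1)) (g := fun p => (p.2, p.1))) => -[].
Qed.

Lemma csumD (I : Type) (a b : I -> T) : csum I (fun i => a i + b i) = csum I a + csum I b.
Proof.
pose c i (x : bool) := if x then a i else b i.
rewrite (csum_ext (b := fun i => csum bool (c i))) => [|i]; last by rewrite csum_bool.
by rewrite exchange_csum csum_bool.
Qed.

Lemma csum_big (I J : Type) (r : seq J) (P : pred J) (F : I -> J -> T) :
  csum I (fun i => \sum_(j <- r | P j) F i j) = \sum_(j <- r | P j) csum I (F^~ j).
Proof.
elim: r => [|j r IHr]; first by rewrite big_nil; apply: csum_eq0 => i; rewrite big_nil.
rewrite big_cons -IHr; case Pj: (P j); last by apply: csum_ext => i; rewrite big_cons Pj.
by rewrite -csumD; apply: csum_ext => i; rewrite big_cons Pj.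
Qed.

Lemma csum_option (X : Type) (b : option X -> T) :
  csum (option X) b = b None + csum X (fun x => b (Some x)).
Proof.
pose f (o : option X) := if o is Some _ then true else false.
rewrite (csum_partition f) csum_bool addrC; congr (_ + _).
  rewrite (csum_single (i0 := exist (fun o => f o = false) None erefl)) // => -[[x|] e] //.
  by case; apply: sval_inj.
symmetry; apply: (csum_reindex (f := fun x => exist (fun o => f o = true) (Some x) erefl)).
move=> [[x|] //= e]; left; exists x; split => //=; first exact: sval_inj.
by move=> x' [->].
Qed.

Lemma csum_ord (k : nat) (a : 'I_k -> T) : csum 'I_k a = \sum_(i < k) a i.
Proof.
elim: k a => [|k IHk] a; first by rewrite big_ord0 csum_empty // => -[].
have liftE (i : 'I_k) : lift ord_max i = widen_ord (leqnSn k) i.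
  by apply: val_inj; rewrite /= /bump leqNgt ltn_ord.
rewrite big_ord_recr /=; under eq_bigr => i _ do rewrite -liftE.
rewrite addrC -IHk -(csum_option (fun o => if o is Some j then a (lift ord_max j) else a ord_max)).
apply: (csum_reindex (f := unlift ord_max)) => -[j|]; left.
- exists (lift ord_max j); split; [exact: liftK | by [] |].
  by move=> i; case: unliftP => // j' -> [<-].
- exists ord_max; split => //; first exact: unlift_none.
  by move=> i; case: unliftP => // ->.
Qed.

Definition scons (X : Type) (x : X) (f : nat -> X) : nat -> X :=
  fun t => if t is t'.+1 then f t' else x.

Lemma csum_scons (X : Type) (F : (nat -> X) -> T) :
  csum (nat -> X) F = csum X (fun x => csum (nat -> X) (fun f => F (scons x f))).
Proof.
rewrite -(csum_pair (fun xf => F (scons xf.1 xf.2))).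
apply: (csum_bij (f := fun g => (g 0%N, fun t => g t.+1))).
- by move=> g; apply: functional_extensionality => -[].
- by case.
Qed.

End CompleteMonoid.

Lemma catIs (T : Type) (r : seq T) : injective (cat^~ r).
Proof.
move=> u v euv; have size_uv : size u = size v.
  by move/(congr1 size): euv; rewrite !size_cat => /addIn.
by rewrite -(take_size_cat r size_uv) euv take_size_cat.
Qed.

Lemma cons_cat_neq (T : eqType) (c : T) (u r : seq T) : (c :: u) ++ r != r.
Proof.
apply/eqP => /(congr1 size)/eqP.
by rewrite /= size_cat -addSn -{2}[size r]add0n eqn_add2r.
Qed.

Section PushdownMatrix.
Variables (S : pzSemiRingType) (n : nat) (Gamma : finType).
Variable M : seq Gamma -> seq Gamma -> 'M[S]_n.
Hypothesis HM : pushdown_matrix M.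

Lemma pdm_nil (s : seq Gamma) : M [::] s = 0.
Proof. by case: HM => _ ->. Qed.

Lemma pdm_cons (q : Gamma) (a s : seq Gamma) :
  M (q :: a) s = if suffix a s then M [:: q] (take (size s - size a) s) else 0.
Proof. by case: HM => _ ->. Qed.

Lemma pdm_cons_suffixN (q : Gamma) (a s : seq Gamma) : ~~ suffix a s -> M (q :: a) s = 0.
Proof. by rewrite pdm_cons => /negbTE ->. Qed.

Lemma pdm_cat (a b r : seq Gamma) : a != [::] -> M (a ++ r) (b ++ r) = M a b.
Proof.
case: a => [//|q a] _; rewrite cat_cons (pdm_cons q (a ++ r)) (pdm_cons q a).
rewrite suffix_catl // eqxx /=.
by case: ifP => // _; rewrite !size_cat subnDr takel_cat // leq_subr.
Qed.

Lemma pdm_suffix (a r s : seq Gamma) : a != [::] -> M (a ++ r) s != 0 -> exists u, s = u ++ r.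
Proof.
case: a => [//|q a] _; rewrite cat_cons pdm_cons.
case: suffixP => [[u ->] _|]; last by rewrite eqxx.
by exists (u ++ a); rewrite catA.
Qed.

End PushdownMatrix.

Section CompleteSemiring.
Variables (S : pzSemiRingType) (csS : forall I : Type, (I -> S) -> S).
Arguments csS : clear implicits.
Hypothesis HS : complete_semiring_axioms csS.

Lemma csS_monoid : complete_monoid_axioms csS.
Proof. by case: HS. Qed.

Lemma csS_mull (I : Type) (a : I -> S) c : csS I (fun i => c * a i) = c * csS I a.
Proof. by case: HS. Qed.

Lemma csS_mulr (I : Type) (a : I -> S) c : csS I (fun i => a i * c) = csS I a * c.
Proof. by case: HS. Qed.

Variable n : nat.
Local Notation msum := (msum csS).

Lemma msum_ext (I : Type) (A B : I -> 'M[S]_n) : A =1 B -> msum A = msum B.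
Proof. by move=> /functional_extensionality ->. Qed.

Lemma msumE (I : Type) (A : I -> 'M[S]_n) r c : msum A r c = csS I (fun k => A k r c).
Proof. by rewrite mxE. Qed.

Lemma msum_reindex (I J : Type) (f : I -> J) (A : I -> 'M[S]_n) (B : J -> 'M[S]_n) :
  (forall j, (exists i0, [/\ f i0 = j, A i0 = B j & forall i, f i = j -> i <> i0 -> A i = 0])
        \/ (B j = 0 /\ forall i, f i = j -> A i = 0)) ->
  msum A = msum B.
Proof.
move=> fibres; apply/matrixP => r c; rewrite !msumE.
apply: (csum_reindex csS_monoid (f := f)) => j.
case: (fibres j) => [[i0 [fi0 <- supp]] | [B0 fibre0]].
- by left; exists i0; split => // i fi ne; rewrite supp // mxE.
- by right; split => [|i fi]; rewrite ?B0 ?(fibre0 i fi) mxE.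
Qed.

Lemma msum_single (I : Type) (A : I -> 'M[S]_n) i0 :
  (forall i, i <> i0 -> A i = 0) -> msum A = A i0.
Proof.
move=> supp; apply/matrixP => r c; rewrite msumE.
by rewrite (csum_single csS_monoid (i0 := i0)) // => i ne; rewrite supp // mxE.
Qed.

Lemma msum_eq0 (I : Type) (A : I -> 'M[S]_n) : (forall i, A i = 0) -> msum A = 0.
Proof.
move=> A0; apply/matrixP => r c; rewrite msumE mxE.
by apply: (csum_eq0 csS_monoid) => i; rewrite A0 mxE.
Qed.

Lemma mulmx_msumr (I : Type) (B : 'M[S]_n) (A : I -> 'M[S]_n) :
  B *m msum A = msum (fun k => B *m A k).
Proof.
apply/matrixP => r c; rewrite msumE mxE.
rewrite (csum_ext csS (b := fun k => \sum_j B r j * A k j c)) => [|k]; last by rewrite mxE.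
rewrite (csum_big csS_monoid); apply: eq_bigr => j _.
by rewrite msumE csS_mull.
Qed.

Lemma mulmx_msuml (I : Type) (B : 'M[S]_n) (A : I -> 'M[S]_n) :
  msum A *m B = msum (fun k => A k *m B).
Proof.
apply/matrixP => r c; rewrite msumE mxE.
rewrite (csum_ext csS (b := fun k => \sum_j A k r j * B j c)) => [|k]; last by rewrite mxE.
rewrite (csum_big csS_monoid); apply: eq_bigr => j _.
by rewrite msumE csS_mulr.
Qed.

Lemma exchange_msum (I J : Type) (A : I -> J -> 'M[S]_n) :
  msum (fun i => msum (A i)) = msum (fun j => msum (A^~ j)).
Proof.
apply/matrixP => r c; rewrite !msumE.
under csum_ext => i do rewrite msumE.
rewrite (exchange_csum csS_monoid).
by apply: csum_ext => j; rewrite msumE.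
Qed.

Lemma msum_pair (I J : Type) (A : I * J -> 'M[S]_n) :
  msum A = msum (fun i => msum (fun j => A (i, j))).
Proof.
apply/matrixP => r c; rewrite !msumE (csum_pair csS_monoid).
by apply: csum_ext => i; rewrite msumE.
Qed.

Lemma msum_shift (A : nat -> 'M[S]_n) : A 0%N = 0 -> msum A = msum (fun m => A m.+1).
Proof.
move=> A0; symmetry; apply: (msum_reindex (f := succn)) => -[|m].
- by right.
- by left; exists m; split => // i [->].
Qed.

Lemma msum_suffix (T : eqType) (r : seq T) (F : seq T -> 'M[S]_n) :
  (forall s, ~~ suffix r s -> F s = 0) -> msum F = msum (fun u => F (u ++ r)).
Proof.
move=> F0; symmetry; apply: (msum_reindex (f := cat^~ r)) => s.
case: (boolP (suffix r s)) => [/suffixP [u ->]|rs].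
- by left; exists u; split => // v /catIs.
- by right; split=> [|u su]; [exact: F0 | move: rs; rewrite -su suffix_suffix].
Qed.

Definition mconv (A B : nat -> 'M[S]_n) (m : nat) : 'M[S]_n :=
  msum (fun ab : nat * nat => if (ab.1 + ab.2 == m)%N then A ab.1 *m B ab.2 else 0).

Lemma msum_mconv (A B : nat -> 'M[S]_n) : msum (mconv A B) = msum A *m msum B.
Proof.
rewrite /mconv exchange_msum.
transitivity (msum (fun ab : nat * nat => A ab.1 *m B ab.2)).
  apply: msum_ext => -[a b] /=; rewrite (msum_single (i0 := (a + b)%N)) ?eqxx //.
  by move=> m ne; case: eqP => // e; case: ne; rewrite e.
rewrite msum_pair mulmx_msuml; apply: msum_ext => a.
by rewrite mulmx_msumr.
Qed.

Lemma mconv0 (A B : nat -> 'M[S]_n) : mconv A B 0 = A 0%N *m B 0%N.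
Proof.
rewrite /mconv (msum_single (i0 := (0%N, 0%N))) //= => -[a b] ne /=.
case: eqP => // /eqP; rewrite addn_eq0 => /andP[/eqP a0 /eqP b0].
by case: ne; rewrite a0 b0.
Qed.

Lemma mconvS (A B : nat -> 'M[S]_n) m :
  A 0%N = 0 -> mconv A B m.+1 = mconv (fun a => A a.+1) B m.
Proof.
move=> A0; symmetry; rewrite /mconv.
apply: (msum_reindex (f := fun ab : nat * nat => (ab.1.+1, ab.2))) => -[[|a] b].
- by right; split => [|[]//]; rewrite A0 mul0mx; case: ifP.
- by left; exists (a, b); split => // -[a' b'] [-> ->].
Qed.

Lemma mconv_unitl (A B : nat -> 'M[S]_n) m :
  A 0%N = 1%:M -> (forall a, A a.+1 = 0) -> mconv A B m = B m.
Proof.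
move=> A0 AS; rewrite /mconv (msum_single (i0 := (0%N, m))) /= ?eqxx ?A0 ?mul1mx //.
move=> [[|a] b] ne; last by rewrite AS mul0mx; case: ifP.
by case: eqP => // e; case: ne; rewrite -e.
Qed.

Lemma mulmx_mconvr (C : 'M[S]_n) (A B : nat -> 'M[S]_n) m :
  C *m mconv A B m = mconv (fun a => C *m A a) B m.
Proof.
rewrite mulmx_msumr; apply: msum_ext => -[a b] /=.
by case: ifP; rewrite ?mulmx0 ?mulmxA.
Qed.

Lemma msum_mconvl (I : Type) (A : I -> nat -> 'M[S]_n) (B : nat -> 'M[S]_n) m :
  msum (fun u => mconv (A u) B m) = mconv (fun a => msum (A^~ a)) B m.
Proof.
rewrite /mconv exchange_msum; apply: msum_ext => -[a b] /=.
by case: ifP => _; [rewrite mulmx_msuml | apply: msum_eq0].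
Qed.

Variables (Gamma : finType) (M : seq Gamma -> seq Gamma -> 'M[S]_n).
Hypothesis HM : pushdown_matrix M.
Local Notation Mpow := (Mpow csS M).
Local Notation Mstar := (Mstar csS M).

Lemma Mpow1 (p p' : seq Gamma) : Mpow 1 p p' = M p p'.
Proof.
rewrite /= (msum_single (i0 := p)) /Mid ?eqxx ?mul1mx // => s /eqP.
by rewrite eq_sym => /negbTE ->; rewrite mul0mx.
Qed.

Lemma MpowSl m (p p' : seq Gamma) : Mpow m.+1 p p' = msum (fun s => M p s *m Mpow m s p').
Proof.
elim: m p' => [|m IHm] p'.
  rewrite Mpow1 (msum_single (i0 := p')) /= /Mid ?eqxx ?mulmx1 // => s /eqP.
  by move=> /negbTE ->; rewrite mulmx0.
have -> : Mpow m.+2 p p' = msum (fun s => Mpow m.+1 p s *m M s p') by [].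
under msum_ext => s do rewrite IHm mulmx_msuml.
rewrite exchange_msum; apply: msum_ext => t.
by rewrite mulmx_msumr; apply: msum_ext => s; rewrite mulmxA.
Qed.

Lemma Mpow_nil m (p' : seq Gamma) : Mpow m.+1 [::] p' = 0.
Proof. by rewrite MpowSl; apply: msum_eq0 => s; rewrite pdm_nil // mul0mx. Qed.

Lemma MpowS_cons m (q : Gamma) (w p' : seq Gamma) :
  Mpow m.+1 (q :: w) p' = msum (fun u => M [:: q] u *m Mpow m (u ++ w) p').
Proof.
rewrite MpowSl (msum_suffix (r := w)) => [|s ws]; last by rewrite pdm_cons_suffixN ?mul0mx.
by apply: msum_ext => u; rewrite -[q :: w]/([:: q] ++ w) pdm_cat.
Qed.

Lemma Mpow_cat m (w r : seq Gamma) :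
  Mpow m (w ++ r) [::] = mconv (fun a => Mpow a w [::]) (fun b => Mpow b r [::]) m.
Proof.
elim: m w => [|m IHm] [|q w]; try by rewrite mconv_unitl // => a; rewrite Mpow_nil.
  by rewrite mconv0 mul0mx.
rewrite cat_cons MpowS_cons mconvS //.
under msum_ext => u do rewrite catA IHm mulmx_mconvr.
rewrite msum_mconvl; congr mconv; apply: functional_extensionality => a.
by rewrite MpowS_cons.
Qed.

Lemma Mstar_cat (w r : seq Gamma) : Mstar (w ++ r) [::] = Mstar w [::] *m Mstar r [::].
Proof. by rewrite /Mstar -msum_mconv; apply: msum_ext => m; apply: Mpow_cat. Qed.

Lemma Mstar_nil : Mstar [::] [::] = 1%:M.
Proof. by rewrite /Mstar (msum_single (i0 := 0%N)) // => -[//|m] _; rewrite Mpow_nil. Qed.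

Lemma xword_Mstar (w : seq Gamma) : xword (fun p => Mstar [:: p] [::]) w = Mstar w [::].
Proof. by elim: w => [|q w IHw] /=; rewrite ?Mstar_nil // IHw -Mstar_cat. Qed.

Lemma Mstar_first_step (p q : seq Gamma) :
  p != q -> Mstar p q = msum (fun s => M p s *m Mstar s q).
Proof.
move=> pq; rewrite /Mstar msum_shift; last by rewrite /= /Mid (negbTE pq).
under msum_ext => m do rewrite MpowSl.
by rewrite exchange_msum; apply: msum_ext => s; rewrite mulmx_msumr.
Qed.

Lemma Mstar_solves_system (p : Gamma) :
  Mstar [:: p] [::] = msum (fun s => M [:: p] s *m xword (fun p => Mstar [:: p] [::]) s).
Proof. by rewrite Mstar_first_step //; apply: msum_ext => s; rewrite xword_Mstar. Qed.

End CompleteSemiring.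

Section CompletePair.
Variables (S : pzSemiRingType) (V : lSemiModType S).
Variables (csS : forall I : Type, (I -> S) -> S) (csV : forall I : Type, (I -> V) -> V).
Variable ip : (nat -> S) -> V.
Arguments csS : clear implicits.
Arguments csV : clear implicits.
Hypothesis Hpair : complete_pair_axioms csS csV ip.

Lemma csS_semiring : complete_semiring_axioms csS.
Proof. by case: Hpair. Qed.

Lemma csV_monoid : complete_monoid_axioms csV.
Proof. by case: Hpair => _ []. Qed.

Lemma scaler_csuml (I : Type) (a : I -> S) (v : V) : csS I a *: v = csV I (fun i => a i *: v).
Proof. by case: Hpair => _ []. Qed.

Lemma scaler_csumr (I : Type) (v : I -> V) (s : S) : s *: csV I v = csV I (fun i => s *: v i).
Proof. by case: Hpair => _ []. Qed.

Lemma ip_cons (s : nat -> S) : ip s = s 0%N *: ip (fun t => s t.+1).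
Proof. by case: Hpair. Qed.

Lemma ip_eq0 (s : nat -> S) t : s t = 0 -> ip s = 0.
Proof.
elim: t s => [|t IHt] s st0; rewrite ip_cons; first by rewrite st0 scale0r.
by rewrite (IHt (fun t => s t.+1)) ?scaler0.
Qed.

Variable n : nat.

Lemma eq_mact (A : 'M[S]_n) (v w : 'I_n -> V) : v =1 w -> mact A v = mact A w.
Proof. by move=> /functional_extensionality ->. Qed.

Lemma mactM (A B : 'M[S]_n) (v : 'I_n -> V) i : mact (A *m B) v i = mact A (mact B v) i.
Proof.
rewrite /mact; under eq_bigr => j _ do rewrite mxE scaler_suml.
rewrite exchange_big; apply: eq_bigr => k _.
by rewrite scaler_sumr; apply: eq_bigr => j _; rewrite scalerA.
Qed.

Lemma mact0 (v : 'I_n -> V) i : mact 0 v i = 0.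
Proof. by rewrite /mact big1 // => j _; rewrite mxE scale0r. Qed.

Lemma mact_eq0 (A : 'M[S]_n) (v : 'I_n -> V) i : (forall j, v j = 0) -> mact A v i = 0.
Proof. by move=> v0; rewrite /mact big1 // => j _; rewrite v0 scaler0. Qed.

Lemma mact1 (v : 'I_n -> V) i : mact 1%:M v i = v i.
Proof.
rewrite /mact (bigD1 i) //= mxE eqxx scale1r big1 ?addr0 // => j ji.
by rewrite mxE eq_sym (negbTE ji) scale0r.
Qed.

Lemma mact_msum (I : Type) (A : I -> 'M[S]_n) (v : 'I_n -> V) i :
  mact (msum csS A) v i = csV I (fun k => mact (A k) v i).
Proof.
rewrite /mact (csum_big csV_monoid); apply: eq_bigr => j _.
by rewrite mxE scaler_csuml.
Qed.

Lemma mact_sumr (A : 'M[S]_n) k (v : 'I_k -> 'I_n -> V) i :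
  mact A (fun i' => \sum_(j < k) v j i') i = \sum_(j < k) mact A (v j) i.
Proof.
rewrite /mact; under eq_bigr => j _ do rewrite scaler_sumr.
by rewrite exchange_big.
Qed.

Variables (Gamma : finType) (M : seq Gamma -> seq Gamma -> 'M[S]_n).
Hypothesis HM : pushdown_matrix M.
Variable l : nat.
Local Notation Mpow := (Mpow csS M).
Local Notation Mstar := (Mstar csS M).
Local Notation Momega := (Momega csV ip M l).

(* ps t and js t are the stack and the state after t + 1 transitions. *)
Definition path_weight (p : seq Gamma) (i : 'I_n) (ps : nat -> seq Gamma)
    (js : nat -> 'I_n) : nat -> S :=
  fun t => M (scons p ps t) (ps t) (scons i js t) (js t).

Definition omega_path (p : seq Gamma) (i : 'I_n) (ps : nat -> seq Gamma) : V :=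
  csV {js : nat -> 'I_n | in_Pl l js} (fun js => ip (path_weight p i ps (sval js))).

Lemma MomegaE (p : seq Gamma) i : Momega p i = csV (nat -> seq Gamma) (omega_path p i).
Proof. by []. Qed.

Lemma omega_path_eq0 (p : seq Gamma) i ps t :
  M (scons p ps t) (ps t) = 0 -> omega_path p i ps = 0.
Proof.
move=> M0; apply: (csum_eq0 csV_monoid) => js.
by apply: (ip_eq0 (t := t)); rewrite /path_weight M0 mxE.
Qed.

Lemma omega_path_nil (p : seq Gamma) i ps t : ps t = [::] -> omega_path p i ps = 0.
Proof. by move=> pst; apply: (omega_path_eq0 i (t := t.+1)); rewrite /= pst pdm_nil. Qed.

Lemma in_Pl_tail (js : nat -> 'I_n) : in_Pl l js -> in_Pl l (fun t => js t.+1).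
Proof. by move=> js_l N; case: (js_l N.+1) => -[|t] // Nt jt; exists t. Qed.

Lemma in_Pl_scons (j : 'I_n) (js : nat -> 'I_n) : in_Pl l js -> in_Pl l (scons j js).
Proof. by move=> js_l N; case: (js_l N) => t Nt jt; exists t.+1 => //; apply: leqW. Qed.

Lemma omega_path_scons (p s : seq Gamma) i ps :
  omega_path p i (scons s ps) = \sum_(j < n) M p s i j *: omega_path s j ps.
Proof.
rewrite /omega_path.
transitivity (csV {js | in_Pl l js} (fun js => M p s i (sval js 0%N) *:
                 ip (path_weight s (sval js 0%N) ps (fun t => sval js t.+1)))).
  apply: csum_ext => -[js js_l] /=; rewrite ip_cons; congr (_ *: ip _).
  by apply: functional_extensionality => -[|t].
pose split_head (js : {js | in_Pl l js}) :=
  (sval js 0%N, exist (in_Pl l) (fun t => sval js t.+1) (in_Pl_tail (svalP js))).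
rewrite (csum_reindex csV_monoid (f := split_head)
  (b := fun jjs => M p s i jjs.1 *: ip (path_weight s jjs.1 ps (sval jjs.2)))).
  rewrite (csum_pair csV_monoid) (csum_ord csV_monoid).
  by apply: eq_bigr => j _; rewrite scaler_csumr.
move=> [j [js js_l]]; left; exists (exist _ (scons j js) (in_Pl_scons j js_l)); split => //.
  by congr pair; apply: sval_inj.
move=> [js' js'_l] [/= <- js'S] ne; case: ne; apply: sval_inj => /=.
by rewrite -js'S; apply: functional_extensionality => -[].
Qed.

Lemma Momega_first_step (p : seq Gamma) i :
  Momega p i = csV (seq Gamma) (fun s => mact (M p s) (Momega s) i).
Proof.
rewrite MomegaE (csum_scons csV_monoid); apply: csum_ext => s.
under csum_ext => ps do rewrite omega_path_scons.
rewrite (csum_big csV_monoid); apply: eq_bigr => j _.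
by rewrite scaler_csumr.
Qed.

Lemma Momega_nil i : Momega [::] i = 0.
Proof.
apply: (csum_eq0 csV_monoid) => ps.
by apply: (omega_path_eq0 i (t := 0)); rewrite pdm_nil.
Qed.

Definition first_visit (r : seq Gamma) (ps : nat -> seq Gamma) : option nat :=
  match excluded_middle_informative (exists t, ps t == r) with
  | left visits => Some (ex_minn visits)
  | right _ => None
  end.

Lemma first_visit_NoneP r ps : first_visit r ps = None <-> (forall t, ps t != r).
Proof.
rewrite /first_visit; case: excluded_middle_informative => [visits|novisit]; split => //.
- by case: visits => t pst /(_ t); rewrite pst.
- by move=> _ t; apply/negP => pst; apply: novisit; exists t.
Qed.

Lemma first_visit_SomeP r ps T :
  first_visit r ps = Some T <-> ps T = r /\ (forall t, (t < T)%N -> ps t != r).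
Proof.
rewrite /first_visit; case: excluded_middle_informative => [visits|novisit]; last first.
  by split => // -[psT _]; case: novisit; exists T; apply/eqP.
case: ex_minnP => m /eqP psm m_min; split => [[<-]|[/eqP psT T_min]].
- by split => // t; apply: contraTN => /m_min; rewrite leqNgt.
- congr Some; apply/eqP; rewrite eqn_leq m_min //=.
  by rewrite leqNgt; apply/negP => /T_min; rewrite psm eqxx.
Qed.

Lemma first_visit_scons r s ps :
  first_visit r (scons s ps) = if s == r then Some 0%N else omap succn (first_visit r ps).
Proof.
case: eqP => [->|sr]; first by apply/first_visit_SomeP.
case E: (first_visit r ps) => [T|] /=.
- move/first_visit_SomeP: E => [psT T_min]; apply/first_visit_SomeP.
  by split => // -[|t] //= tT; [apply/eqP | apply: T_min].
- by move/first_visit_NoneP: E => novisit; apply/first_visit_NoneP => -[|t] //=; apply/eqP.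
Qed.

Definition Momega_visit (r : seq Gamma) (T : nat) (p : seq Gamma) (i : 'I_n) : V :=
  csV (nat -> seq Gamma)
    (fun ps => if first_visit r ps == Some T then omega_path p i ps else 0).

(* Total weight of the paths p = s_0, s_1, ..., s_(T+1) = r avoiding r at the steps 1 .. T. *)
Fixpoint first_passage (r : seq Gamma) (T : nat) (p : seq Gamma) : 'M[S]_n :=
  if T is T'.+1 then msum csS (fun s => if s == r then 0 else M p s *m first_passage r T' s)
  else M p r.

Lemma Momega_visit_first_step r T (p : seq Gamma) i :
  Momega_visit r T p i =
  csV (seq Gamma) (fun s => mact (M p s) (fun j => csV (nat -> seq Gamma) (fun ps =>
    if first_visit r (scons s ps) == Some T then omega_path s j ps else 0)) i).
Proof.
rewrite /Momega_visit (csum_scons csV_monoid); apply: csum_ext => s.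
rewrite /mact; under eq_bigr => j _ do rewrite scaler_csumr.
rewrite -(csum_big csV_monoid); apply: csum_ext => ps.
by case: ifP => _; rewrite ?omega_path_scons // big1 // => j _; rewrite scaler0.
Qed.

Lemma Momega_visit0 r (p : seq Gamma) i : Momega_visit r 0 p i = mact (M p r) (Momega r) i.
Proof.
rewrite Momega_visit_first_step (csum_single csV_monoid (i0 := r)) => [|s /eqP sr].
  by congr mact; apply: functional_extensionality => j; apply: csum_ext => ps;
    rewrite first_visit_scons eqxx.
apply: mact_eq0 => j; apply: (csum_eq0 csV_monoid) => ps.
by rewrite first_visit_scons (negbTE sr); case: first_visit.
Qed.

Lemma Momega_visitS r T (p : seq Gamma) i :
  Momega_visit r T.+1 p i =
  csV (seq Gamma) (fun s => if s == r then 0 else mact (M p s) (Momega_visit r T s) i).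
Proof.
rewrite Momega_visit_first_step; apply: csum_ext => s.
case: eqP => [->|/eqP sr].
  apply: mact_eq0 => j; apply: (csum_eq0 csV_monoid) => ps.
  by rewrite first_visit_scons eqxx.
congr mact; apply: functional_extensionality => j.
by apply: csum_ext => ps; rewrite first_visit_scons (negbTE sr); case: first_visit.
Qed.

Lemma Momega_visitE r T (p : seq Gamma) i :
  Momega_visit r T p i = mact (first_passage r T p) (Momega r) i.
Proof.
elim: T p i => [|T IHT] p i; first exact: Momega_visit0.
rewrite Momega_visitS /= mact_msum; apply: csum_ext => s.
by case: eqP => _; rewrite ?mact0 // mactM (eq_mact _ (IHT s)).
Qed.

Lemma first_passage_lift r T (u : seq Gamma) :
  u != [::] -> first_passage r T (u ++ r) = Mpow T.+1 u [::].
Proof.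
elim: T u => [|T IHT] u u0; first by rewrite (Mpow1 csS_semiring) /= -{2}[r]cat0s pdm_cat.
rewrite [LHS]/= (msum_suffix csS_semiring (r := r)) => [|s rs]; last first.
  case: eqP => // _; case: (boolP (M (u ++ r) s == 0)) => [/eqP -> | /(pdm_suffix HM u0) [v sv]].
    by rewrite mul0mx.
  by move: rs; rewrite sv suffix_suffix.
rewrite (MpowSl csS_semiring); apply: msum_ext => -[|c t].
  by rewrite cat0s eqxx (Mpow_nil csS_semiring HM) mulmx0.
by rewrite (negbTE (cons_cat_neq _ _ _)) pdm_cat // IHT.
Qed.

Definition lift_path (r : seq Gamma) (ps : nat -> seq Gamma) : nat -> seq Gamma :=
  fun t => ps t ++ r.

Definition unlift_path (r : seq Gamma) (ps : nat -> seq Gamma) : nat -> seq Gamma :=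
  fun t => take (size (ps t) - size r) (ps t).

Lemma lift_pathK r : cancel (lift_path r) (unlift_path r).
Proof.
move=> ps; apply: functional_extensionality => t.
by rewrite /unlift_path /lift_path size_cat addnK take_size_cat.
Qed.

Lemma avoiding_omega_path (q : Gamma) r i ps : (forall t, ps t != r) ->
  omega_path (q :: r) i ps = 0 \/ ps = lift_path r (unlift_path r ps).
Proof.
move=> avoid; case: (classic (exists t, M (scons (q :: r) ps t) (ps t) = 0)) => [[t Mt]|nz].
  by left; apply: omega_path_eq0 Mt.
right; apply: functional_extensionality => t; rewrite /lift_path /unlift_path.
suff [u _ ->] : exists2 u, u != [::] & ps t = u ++ r by rewrite size_cat addnK take_size_cat.
have nz' t' : M (scons (q :: r) ps t') (ps t') != 0 by apply/eqP => Mt; apply: nz; exists t'.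
elim: t => [|t [u u0 psE]].
- move: (nz' 0%N) => /=; rewrite -[q :: r]/([:: q] ++ r).
  move=> /(pdm_suffix HM (a := [:: q]) isT) [u psE].
  by exists u => //; apply: contraNneq (avoid 0%N) => u0; rewrite psE u0 eqxx.
- move: (nz' t.+1) => /=; rewrite psE => /(pdm_suffix HM u0) [v psE'].
  by exists v => //; apply: contraNneq (avoid t.+1) => v0; rewrite psE' v0 eqxx.
Qed.

Lemma Momega_avoid (q : Gamma) r i :
  csV (nat -> seq Gamma)
    (fun ps => if first_visit r ps == None then omega_path (q :: r) i ps else 0)
  = Momega [:: q] i.
Proof.
rewrite MomegaE; apply: (csum_reindex csV_monoid (f := unlift_path r)) => ps; left.
exists (lift_path r ps); split; first exact: lift_pathK.
- case: (classic (exists t, ps t = [::])) => [[t pst]|nonempty].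
    rewrite (omega_path_nil _ i pst); case: ifP => // /eqP /first_visit_NoneP /(_ t).
    by rewrite /lift_path pst eqxx.
  have nonempty' t : ps t != [::] by apply/eqP => pst; apply: nonempty; exists t.
  have -> : first_visit r (lift_path r ps) == None.
    apply/eqP/first_visit_NoneP => t; rewrite /lift_path.
    by case: (ps t) (nonempty' t) => // c u _; apply: cons_cat_neq.
  apply: csum_ext => js; congr ip; apply: functional_extensionality => -[|t] /=.
    by rewrite /path_weight /= -[q :: r]/([:: q] ++ r) pdm_cat.
  by rewrite /path_weight /= /lift_path pdm_cat.
- move=> ps' <- ne; case E: (first_visit r ps') => [T|] //.
  by have [|//] := avoiding_omega_path q i (proj1 (first_visit_NoneP r ps') E).
Qed.

Lemma Momega_visiting (q : Gamma) r i :
  csV (nat -> seq Gamma)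
    (fun ps => if first_visit r ps == None then 0 else omega_path (q :: r) i ps)
  = mact (Mstar [:: q] [::]) (Momega r) i.
Proof.
transitivity (csV nat (fun T => Momega_visit r T (q :: r) i)).
  rewrite /Momega_visit (exchange_csum csV_monoid); apply: csum_ext => ps.
  case: (first_visit r ps) => [T0|] /=; last by symmetry; apply: (csum_eq0 csV_monoid).
  rewrite (csum_single csV_monoid (i0 := T0)) ?eqxx // => T.
  by case: eqP => // -[->].
under csum_ext => T do rewrite Momega_visitE -[q :: r]/([:: q] ++ r) first_passage_lift //.
by rewrite -mact_msum /Mstar [in RHS](msum_shift csS_semiring).
Qed.

Lemma Momega_cons (q : Gamma) r i :
  Momega (q :: r) i = Momega [:: q] i + mact (Mstar [:: q] [::]) (Momega r) i.
Proof.
rewrite -(Momega_avoid q r) -(Momega_visiting q r) -(csumD csV_monoid) MomegaE.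
by apply: csum_ext => ps; case: ifP; rewrite ?addr0 ?add0r.
Qed.

Lemma Momega_word (p0 : Gamma) (w : seq Gamma) i :
  Momega w i = \sum_(j < size w) mact (xword (fun p => Mstar [:: p] [::]) (take j w))
                                    (Momega [:: nth p0 w j]) i.
Proof.
elim: w i => [|q w IHw] i; first by rewrite big_ord0 Momega_nil.
rewrite Momega_cons big_ord_recl /= mact1 (eq_mact _ IHw) mact_sumr; congr (_ + _).
by apply: eq_bigr => j _; rewrite mactM.
Qed.

Lemma Momega_solves_system (p0 p : Gamma) i :
  Momega [:: p] i =
  csV {w : seq Gamma | (0 < size w)%N} (fun w =>
    mact (M [:: p] (sval w))
      (fun i' => \sum_(j < size (sval w))
                   mact (xword (fun p => Mstar [:: p] [::]) (take j (sval w)))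
                        (Momega [:: nth p0 (sval w) j]) i') i).
Proof.
rewrite Momega_first_step; symmetry.
apply: (csum_reindex csV_monoid (f := @sval _ _)) => -[|q w].
  right; split=> [|[w' w'0] /= w'E]; last by move: w'0; rewrite w'E.
  by apply: mact_eq0 => j; rewrite Momega_nil.
left; exists (exist _ (q :: w) isT); split => //=.
  by congr mact; apply: functional_extensionality => i'; rewrite (Momega_word p0).
by move=> [w' w'0] /= w'E ne; case: ne; apply: sval_inj.
Qed.

End CompletePair.

Theorem theorem11
  (S : pzSemiRingType) (V : lSemiModType S)
  (csS : forall I : Type, (I -> S) -> S) (csV : forall I : Type, (I -> V) -> V)
  (ip : (nat -> S) -> V)
  (Hpair : complete_pair_axioms csS csV ip)
  (S' : S -> Prop) (HS'0 : S' 0) (HS'1 : S' 1)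
  (n : nat) (Gamma : finType)
  (I : 'rV[S]_n) (M : seq Gamma -> seq Gamma -> 'M[S]_n) (P : 'cV[S]_n)
  (p0 : Gamma) (l : nat)
  (HP : is_omega_pda S' I M P p0 l) :
  let x : Gamma -> 'M[S]_n := fun p => Mstar csS M [:: p] [::] in
  let z : Gamma -> 'I_n -> V := fun p => Momega csV ip M l [:: p] in
  (forall p : Gamma,
      x p = msum csS (fun pi : seq Gamma => M [:: p] pi *m xword x pi)) /\
  (forall (p : Gamma) (i : 'I_n),
      z p i =
      csV {w : seq Gamma | (0 < size w)%N} (fun w =>
        mact (M [:: p] (proj1_sig w))
          (fun i' => \sum_(j < size (proj1_sig w))
                       mact (xword x (take j (proj1_sig w)))
                            (z (nth p0 (proj1_sig w) j)) i') i)) /\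
  behavior csS csV ip M I P p0 l =
    ((I *m x p0 *m P) 0 0, \sum_(j < n) I 0 j *: z p0 j).
Proof.
move=> x z; have HM : pushdown_matrix M by case: HP.
have x_eq := Mstar_solves_system (csS_semiring Hpair) HM.
have z_eq := Momega_solves_system Hpair HM l p0.
by split; [exact: x_eq | split=> // p i; apply: z_eq].
Qed.
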